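(* Let $\mathbf V$ be a variety of $\mathscr J$-trivial monoids. Then $A_0^1\notin\mathbf V$ if and only if $\mathbf V$ is a variety of aperiodic monoids with commuting idempotents (i.e., in every monoid of $\mathbf V$ all subgroups are trivial and any two idempotents commute).
   Context: A monoid $S$ is $\mathscr J$-trivial if $SaS=SbS$ implies $a=b$. $A_0=\langle e,f\mid e^2=e,\ f^2=f,\ fe=0\rangle=\{e,f,ef,0\}$ and $A_0^1$ is $A_0$ with a new identity element adjoined. *)

From Stdlib Require Import List.
Import ListNotations.

Record monoid : Type := Monoid {
  carrier :> Type;
  mmul : carrier -> carrier -> carrier;
  mone : carrier;
  mmulA : forall x y z, mmul x (mmul y z) = mmul (mmul x y) z;
  mmul1l : forall x, mmul mone x = x;
  mmulr1 : forall x, mmul x mone = x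
}.
Arguments mmul {m}.
Arguments mone {m}.

Definition word := list nat.

Fixpoint eval_word (M : monoid) (s : nat -> M) (w : word) : M :=
  match w with
  | [] => mone
  | i :: w' => mmul (s i) (eval_word M s w')
  end.

Definition satisfies (M : monoid) (u v : word) : Prop :=
  forall s : nat -> M, eval_word M s u = eval_word M s v.

(* A variety of monoids is the class of all models of a set Sigma of
   identities (Birkhoff); [in_variety Sigma M] means M belongs to it. *)
Definition in_variety (Sigma : word -> word -> Prop) (M : monoid) : Prop :=
  forall u v, Sigma u v -> satisfies M u v.

(* J-trivial: S a S = S b S implies a = b. *)
Definition J_trivial (M : monoid) : Prop :=
  forall a b : M,
    (forall z : M, (exists x y, z = mmul (mmul x a) y) <->
                   (exists x y, z = mmul (mmul x b) y)) ->
    a = b.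

(* G (a subset of M) is a subgroup of M: closed under the multiplication and
   a group for it (with its own identity element e, an idempotent of M). *)
Definition is_subgroup (M : monoid) (G : M -> Prop) : Prop :=
  (forall x y, G x -> G y -> G (mmul x y)) /\
  exists e, G e /\
    (forall g, G g -> mmul e g = g /\ mmul g e = g) /\
    (forall g, G g -> exists h, G h /\ mmul g h = e /\ mmul h g = e).

Definition aperiodic (M : monoid) : Prop :=
  forall G : M -> Prop, is_subgroup M G -> forall g h, G g -> G h -> g = h.

Definition commuting_idempotents (M : monoid) : Prop :=
  forall e f : M, mmul e e = e -> mmul f f = f -> mmul e f = mmul f e.

(* A_0^1 = {1, e, f, ef, 0} with e^2 = e, f^2 = f, fe = 0. *)
Inductive A01_t : Type := A1 | Ae | Af | Aef | A0.

Definition A01_mul (x y : A01_t) : A01_t :=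
  match x, y with
  | A1, y => y
  | x, A1 => x
  | A0, _ => A0
  | _, A0 => A0
  | Ae, Ae => Ae
  | Ae, Af => Aef
  | Ae, Aef => Aef
  | Af, Ae => A0
  | Af, Af => Af
  | Af, Aef => A0
  | Aef, Ae => A0
  | Aef, Af => Aef
  | Aef, Aef => A0
  end.

Lemma A01_mulA : forall x y z, A01_mul x (A01_mul y z) = A01_mul (A01_mul x y) z.
Proof. intros [] [] []; reflexivity. Qed.
Lemma A01_mul1l : forall x, A01_mul A1 x = x.
Proof. intros []; reflexivity. Qed.
Lemma A01_mulr1 : forall x, A01_mul x A1 = x.
Proof. intros []; reflexivity. Qed.

Definition A01 : monoid := Monoid A01_t A01_mul A1 A01_mulA A01_mul1l A01_mulr1.

(** If the idempotents [e], [f] of a J-trivial monoid [M] do not commute, then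
    [ef <> fe], so by J-triviality one of them, say [ef], lies outside the ideal
    [I = M fe M].  Collapsing [I] to [0] turns the submonoid generated by [e]
    and [f] into a copy of [A_0^1]: so [A_0^1] divides [M] and satisfies every
    identity of [M].  Conversely [A_0^1] itself has non-commuting idempotents,
    and J-trivial monoids are aperiodic since a group element and the group's
    identity generate the same ideal. *)

From Stdlib Require Import Classical.

Set Implicit Arguments.

Local Infix "*" := mmul.
Local Notation "1" := mone.

Definition in_ideal (M : monoid) (p z : M) : Prop := exists x y, z = x * p * y.
Arguments in_ideal {M}.

Section Ideals.
Variable M : monoid.
Implicit Types p q x y z : M.

Lemma in_ideal_refl p : in_ideal p p.
Proof. exists 1, 1. now rewrite mmul1l, mmulr1. Qed.

Lemma in_ideal_mid x p y : in_ideal p (x * p * y).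
Proof. now exists x, y. Qed.

Lemma in_ideal_trans p q z : in_ideal p q -> in_ideal q z -> in_ideal p z.
Proof.
  intros [x [y ->]] [x' [y' ->]].
  exists (x' * x), (y * y'). now rewrite !mmulA.
Qed.

Lemma in_ideal_mull x p z : in_ideal p z -> in_ideal p (x * z).
Proof.
  intro Hz. apply (in_ideal_trans Hz). rewrite <- (mmulr1 _ (x * z)).
  apply in_ideal_mid.
Qed.

Lemma in_ideal_mulr p z y : in_ideal p z -> in_ideal p (z * y).
Proof.
  intro Hz. apply (in_ideal_trans Hz). rewrite <- (mmul1l _ z) at 2.
  apply in_ideal_mid.
Qed.

Lemma J_trivial_antisym p q :
  J_trivial M -> in_ideal p q -> in_ideal q p -> p = q.
Proof.
  intros HJ Hpq Hqp. apply HJ. intro z. split.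
  - exact (in_ideal_trans Hqp).
  - exact (in_ideal_trans Hpq).
Qed.

Lemma J_trivial_aperiodic : J_trivial M -> aperiodic M.
Proof.
  intros HJ G [_ [e [_ [Hid Hinv]]]].
  assert (Hunit : forall g, G g -> g = e).
  { intros g Hg. apply J_trivial_antisym; [exact HJ | |].
    - destruct (Hinv g Hg) as [h [_ [Hgh _]]].
      rewrite <- Hgh. apply in_ideal_mulr, in_ideal_refl.
    - destruct (Hid g Hg) as [Heg _].
      rewrite <- Heg. apply in_ideal_mulr, in_ideal_refl. }
  intros g h Hg Hh. now rewrite (Hunit g Hg), (Hunit h Hh).
Qed.

End Ideals.

Section Division.
Variables (M N : monoid) (R : M -> N -> Prop) (lift : N -> M).
Hypothesis R_one : R 1 1.
Hypothesis R_mul : forall m n a b, R m a -> R n b -> R (m * n) (a * b).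
Hypothesis R_lift : forall a, R (lift a) a.
Hypothesis R_fun : forall m a b, R m a -> R m b -> a = b.

Lemma R_eval_word (s : nat -> N) (w : word) :
  R (eval_word M (fun i => lift (s i)) w) (eval_word N s w).
Proof.
  induction w as [|i w IH]; simpl.
  - exact R_one.
  - exact (R_mul (R_lift (s i)) IH).
Qed.

Lemma satisfies_div u v : satisfies M u v -> satisfies N u v.
Proof.
  intros Huv s. apply (R_fun (R_eval_word s u)).
  rewrite (Huv (fun i => lift (s i))). apply R_eval_word.
Qed.

Lemma in_variety_div Sigma : in_variety Sigma M -> in_variety Sigma N.
Proof. intros HM u v Huv. exact (satisfies_div (HM u v Huv)). Qed.

End Division.

Lemma A01_zero_separating (a b : A01) :
  (forall c d : A01, c * a * d = A0 <-> c * b * d = A0) -> a = b.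
Proof.
  intro Hab.
  pose proof (Hab A1 A1) as H11; pose proof (Hab Af A1) as Hf1;
    pose proof (Hab A1 Ae) as H1e.
  destruct a, b; simpl in *; try reflexivity; exfalso; intuition discriminate.
Qed.

Lemma A01_not_commuting_idempotents : ~ commuting_idempotents A01.
Proof. intro Hc. discriminate (Hc Ae Af eq_refl eq_refl). Qed.

Section A01_divides.
Variables (M : monoid) (e f : M).
Hypothesis He : e * e = e.
Hypothesis Hf : f * f = f.
Hypothesis ef_notin : ~ in_ideal (f * e) (e * f).

Definition A01_lift (a : A01) : M :=
  match a with A1 => 1 | Ae => e | Af => f | Aef => e * f | A0 => f * e end.

(* The Rees quotient of the submonoid generated by [e], [f] by its ideal [M fe M]. *)
Definition A01_rel (m : M) (a : A01) : Prop :=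
  match a with A0 => in_ideal (f * e) m | _ => m = A01_lift a end.

Lemma A01_rel_lift a : A01_rel (A01_lift a) a.
Proof. destruct a; try reflexivity. apply in_ideal_refl. Qed.

Lemma A01_rel_mul_zero_l m n (a : A01) :
  A01_rel m A0 -> A01_rel (m * n) ((A0 : A01) * a).
Proof. destruct a; simpl; try apply in_ideal_mulr; now rewrite ?mmulr1. Qed.

Lemma A01_rel_mul_zero_r m n (a : A01) :
  A01_rel n A0 -> A01_rel (m * n) (a * (A0 : A01)).
Proof. destruct a; simpl; try apply in_ideal_mull; now rewrite ?mmul1l. Qed.

Lemma A01_rel_lift_mul (a b : A01) :
  a <> A0 -> b <> A0 -> A01_rel (A01_lift a * A01_lift b) (a * b).
Proof.
  destruct a, b; intros Ha Hb; try contradiction; simpl;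
    rewrite ?mmul1l, ?mmulr1; try reflexivity; try assumption;
    try apply in_ideal_refl.
  - now rewrite mmulA, He.
  - rewrite mmulA. apply in_ideal_mulr, in_ideal_refl.
  - rewrite <- mmulA. apply in_ideal_mull, in_ideal_refl.
  - now rewrite <- mmulA, Hf.
  - rewrite mmulA, <- (mmulA _ e f e). apply in_ideal_mid.
Qed.

Lemma A01_rel_mul m n (a b : A01) :
  A01_rel m a -> A01_rel n b -> A01_rel (m * n) (a * b).
Proof.
  intros Hm Hn.
  destruct (classic (a = A0)) as [-> | Ha]; [now apply A01_rel_mul_zero_l |].
  destruct (classic (b = A0)) as [-> | Hb]; [now apply A01_rel_mul_zero_r |].
  destruct a; try contradiction; destruct b; try contradiction;
    simpl in Hm, Hn; subst m n; now apply A01_rel_lift_mul.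
Qed.

Lemma A01_rel_not_in_ideal m a :
  A01_rel m a -> a <> A0 -> ~ in_ideal (f * e) m.
Proof.
  intros Hm Ha Hfe. apply ef_notin, (in_ideal_trans Hfe).
  destruct a; try contradiction; simpl in Hm; subst m.
  - exists e, f. now rewrite mmulr1.
  - exists 1, f. now rewrite mmul1l.
  - exists e, 1. now rewrite mmulr1.
  - apply in_ideal_refl.
Qed.

Lemma A01_rel_zero {m} {a : A01} : A01_rel m a -> in_ideal (f * e) m -> a = A0.
Proof.
  intros Hm Hfe. destruct a; try reflexivity; exfalso;
    apply (A01_rel_not_in_ideal Hm); easy.
Qed.

(* Distinct elements of [A_0^1] differ in which of their two-sided multiples vanish,
   and vanishing is seen in [M] as membership in [M fe M]. *)
Lemma A01_rel_fun m (a b : A01) : A01_rel m a -> A01_rel m b -> a = b.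
Proof.
  intros Ha Hb. apply A01_zero_separating. intros c d.
  pose (x := A01_lift c * m * A01_lift d).
  assert (Hxa : A01_rel x (c * a * d)).
  { apply A01_rel_mul; [apply A01_rel_mul |]; auto using A01_rel_lift. }
  assert (Hxb : A01_rel x (c * b * d)).
  { apply A01_rel_mul; [apply A01_rel_mul |]; auto using A01_rel_lift. }
  split; intro H0.
  - rewrite H0 in Hxa. exact (A01_rel_zero Hxb Hxa).
  - rewrite H0 in Hxb. exact (A01_rel_zero Hxa Hxb).
Qed.

Lemma in_variety_A01_of_not_in_ideal Sigma :
  in_variety Sigma M -> in_variety Sigma A01.
Proof.
  apply (@in_variety_div M A01 A01_rel A01_lift).
  - reflexivity.
  - exact A01_rel_mul.
  - exact A01_rel_lift.
  - exact A01_rel_fun.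
Qed.

End A01_divides.

Lemma in_variety_A01_of_not_commuting Sigma (M : monoid) (e f : M) :
  J_trivial M -> in_variety Sigma M -> e * e = e -> f * f = f ->
  e * f <> f * e -> in_variety Sigma A01.
Proof.
  intros HJ HM He Hf Hef.
  destruct (classic (in_ideal (f * e) (e * f))) as [ef_in | ef_notin];
    [| exact (in_variety_A01_of_not_in_ideal He Hf ef_notin HM)].
  destruct (classic (in_ideal (e * f) (f * e))) as [fe_in | fe_notin];
    [| exact (in_variety_A01_of_not_in_ideal Hf He fe_notin HM)].
  exfalso. exact (Hef (J_trivial_antisym HJ fe_in ef_in)).
Qed.

Theorem fact6p4 (Sigma : word -> word -> Prop) :
  (forall M : monoid, in_variety Sigma M -> J_trivial M) ->
  (~ in_variety Sigma A01 <->
   forall M : monoid, in_variety Sigma M ->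
     aperiodic M /\ commuting_idempotents M).
Proof.
  intros HJ. split.
  - intros HA M HM. split.
    + exact (J_trivial_aperiodic (HJ M HM)).
    + intros e f He Hf. apply NNPP. intro Hef.
      exact (HA (in_variety_A01_of_not_commuting (HJ M HM) HM He Hf Hef)).
  - intros Hall HA. exact (A01_not_commuting_idempotents (proj2 (Hall A01 HA))).
Qed.
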